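(* Let $S=\{0,1,2,\dots\}$, let $\lambda,\mu>0$, and let $Q=\{q(i,j):i,j\in S\}$ be given by $q(i,i+1)=\lambda$; $q(i,i+k)=0$ for $k\ge 2$; $q(i,i-k)=\mu$ for $i\ge 1$ and $k=1,\dots,i$; $q(i,j)=0$ for $j<0$ (i.e. no jumps below $0$); and $q(i,i)=-(\lambda+i\mu)$. Let $\Pi=\{\pi(i,j)\}$ be the associated jump matrix: $c(i)=\lambda+i\mu$, $\pi(i,j)=q(i,j)/c(i)$ for $i\neq j$, $\pi(i,i)=0$. Then any discrete-time Markov chain on $S$ with initial distribution a strictly positive probability measure $\tau$ on $S$ and transition probabilities $\pi(i,j)$ is irreducible and recurrent. Consequently, the minimal nonnegative solution $p^*_t(x,y)$ of the Kolmogorov backward equations $$\frac{d}{dt}p_t(x,y)=\sum_{z\in S}q(x,z)p_t(z,y)\ (t>0,\ x,y\in S),\qquad p_0(x,y)=\delta_{xy},$$ is stochastic, i.e. $\sum_{y\in S}p^*_t(x,y)=1$ for all $x\in S$, $t\ge 0$.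
   Context: The minimal solution of the backward equations is the standard one associated with a conservative rate matrix $Q$ (nonnegative off-diagonal entries, rows summing to $0$); it is known to satisfy the Chapman–Kolmogorov equations and all transition-function properties except possibly $\sum_y p_t(x,y)=1$. *)

From Stdlib Require Import Reals Arith.
From Coquelicot Require Import Coquelicot.
Open Scope R_scope.

Definition qmat (lam mu : R) (i j : nat) : R :=
  if Nat.eqb j (S i) then lam
  else if Nat.ltb j i then mu
  else if Nat.eqb j i then - (lam + INR i * mu)
  else 0.

Definition crate (lam mu : R) (i : nat) : R := lam + INR i * mu.

Definition jump_matrix (q : nat -> nat -> R) (c : nat -> R) (i j : nat) : R :=
  if Nat.eqb i j then 0 else q i j / c i.

Fixpoint nstep (P : nat -> nat -> R) (n : nat) (i j : nat) : R :=
  match n with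
  | O => if Nat.eqb i j then 1 else 0
  | S m => Series (fun k => P i k * nstep P m k j)
  end.

(* First-passage probabilities: fpass P n i j = P_i(first visit to j at time n), n >= 1. *)
Fixpoint fpass (P : nat -> nat -> R) (n : nat) (i j : nat) : R :=
  match n with
  | O => 0
  | S O => P i j
  | S m => Series (fun k => if Nat.eqb k j then 0 else P i k * fpass P m k j)
  end.

Definition irreducible (P : nat -> nat -> R) : Prop :=
  forall i j : nat, exists n : nat, 0 < nstep P n i j.

Definition recurrent_state (P : nat -> nat -> R) (i : nat) : Prop :=
  is_series (fun n => fpass P (S n) i i) 1.

Definition recurrent (P : nat -> nat -> R) : Prop :=
  forall i : nat, recurrent_state P i.

Definition backward_solution (q : nat -> nat -> R) (p : R -> nat -> nat -> R) : Prop :=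
  (forall t x y, 0 <= t -> 0 <= p t x y) /\
  (forall x y, p 0 x y = if Nat.eqb x y then 1 else 0) /\
  (forall x y, forall eps, 0 < eps -> exists delta, 0 < delta /\
       forall s, 0 <= s < delta -> Rabs (p s x y - p 0 x y) < eps) /\
  (forall t x y, 0 < t ->
       ex_series (fun z => q x z * p t z y) /\
       is_derive (fun s => p s x y) t (Series (fun z => q x z * p t z y))).

Definition minimal_backward_solution (q : nat -> nat -> R) (p : R -> nat -> nat -> R) : Prop :=
  backward_solution q p /\
  forall p', backward_solution q p' ->
    forall t x y, 0 <= t -> p t x y <= p' t x y.

From Stdlib Require Import Reals Arith Lia Lra Classical.
From Coquelicot Require Import Coquelicot.
Open Scope R_scope.

(* The jump chain climbs one state at a time and can jump to every lower state, so it
   is irreducible.  A state [j] is recurrent as soon as there is a Lyapunov function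
   [V >= 0] with [1 + sum_(l <> j) pi(k,l) V(l) <= V(k)]: the probability of avoiding
   [j] during [n] steps is then at most [V(k) / n].  Such a [V] is exponential below
   [j] and linear above it.

   For stochasticity, note first that [2 ^ y] is almost an eigenfunction of [Q]:
   [(Q 2^.)(y) <= lam 2^y].  A comparison principle for the backward equations
   truncated to [{0, ..., N+1}] then shows that every nonnegative backward solution
   has [sum_(y <= N) p_t(x,y) >= 1 - e^(lam t) 2^(x-N-1)] for [x <= N].  Conversely,
   merging all states [> y] into one produces a finite chain, and its matrix exponential
   yields an explicit backward solution whose row sums are at most 1; the minimal
   solution lies below it. *)

(** * Finite sums and row-finite matrices *)

Fixpoint psum (f : nat -> R) (n : nat) : R :=
  match n with O => 0 | S m => psum f m + f m end.

Lemma psum_ext f g n : (forall l, (l < n)%nat -> f l = g l) -> psum f n = psum g n.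
Proof.
  induction n as [|n IH]; intros H; simpl; [reflexivity|].
  rewrite IH by (intros; apply H; lia). rewrite H by lia. reflexivity.
Qed.

Lemma psum_plus f g n : psum (fun l => f l + g l) n = psum f n + psum g n.
Proof. induction n as [|n IH]; simpl; [lra|]. rewrite IH. lra. Qed.

Lemma psum_minus f g n : psum (fun l => f l - g l) n = psum f n - psum g n.
Proof. induction n as [|n IH]; simpl; [lra|]. rewrite IH. lra. Qed.

Lemma psum_scal a f n : psum (fun l => a * f l) n = a * psum f n.
Proof. induction n as [|n IH]; simpl; [lra|]. rewrite IH. lra. Qed.

Lemma psum_const a n : psum (fun _ => a) n = INR n * a.
Proof. induction n as [|n IH]; simpl psum; [simpl; lra|]. rewrite IH, S_INR. lra. Qed.

Lemma psum_le f g n : (forall l, (l < n)%nat -> f l <= g l) -> psum f n <= psum g n.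
Proof.
  induction n as [|n IH]; intros H; simpl; [lra|].
  assert (f n <= g n) by (apply H; lia).
  assert (psum f n <= psum g n) by (apply IH; intros; apply H; lia). lra.
Qed.

Lemma psum_nonneg f n : (forall l, (l < n)%nat -> 0 <= f l) -> 0 <= psum f n.
Proof. intros H. rewrite <- (Rmult_0_r (INR n)), <- psum_const. now apply psum_le. Qed.

Lemma psum_ge_term f n k : (forall l, (l < n)%nat -> 0 <= f l) -> (k < n)%nat -> f k <= psum f n.
Proof.
  induction n as [|n IH]; intros H Hk; [lia|]. simpl.
  destruct (Nat.eq_dec k n) as [->|Hne].
  - assert (0 <= psum f n) by (apply psum_nonneg; intros; apply H; lia). lra.
  - assert (f k <= psum f n) by (apply IH; [intros; apply H|]; lia).
    assert (0 <= f n) by (apply H; lia). lra.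
Qed.

Lemma psum_shift f n : psum f (S n) = f O + psum (fun l => f (S l)) n.
Proof. induction n as [|n IH]; simpl in *; [lra|]. rewrite IH. lra. Qed.

Lemma psum_stable f n m :
  (forall l, (n <= l)%nat -> f l = 0) -> (n <= m)%nat -> psum f m = psum f n.
Proof. intros H Hm. induction Hm as [|m Hm IH]; [reflexivity|]. simpl. rewrite IH, H by lia. lra. Qed.

Lemma psum_swap (g : nat -> nat -> R) N n :
  psum (fun i => psum (g i) n) N = psum (fun l => psum (fun i => g i l) N) n.
Proof.
  induction N as [|N IH]; simpl.
  - rewrite psum_const. ring.
  - rewrite IH, <- psum_plus. reflexivity.
Qed.

Lemma psum_delta k (f : nat -> R) n :
  psum (fun l => if (k =? l)%nat then f l else 0) n = if (k <? n)%nat then f k else 0.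
Proof.
  induction n as [|n IH]; simpl psum; [destruct (Nat.ltb_spec k 0); [lia|reflexivity]|].
  rewrite IH. destruct (Nat.eqb_spec k n) as [->|Hne].
  - destruct (Nat.ltb_spec n n), (Nat.ltb_spec n (S n)); lia || ring.
  - destruct (Nat.ltb_spec k n), (Nat.ltb_spec k (S n)); lia || ring.
Qed.

Lemma psum_id n : psum INR n = INR n * (INR n - 1) / 2.
Proof. induction n as [|n IH]; simpl psum; [simpl; field|]. rewrite IH, S_INR. field. Qed.

Lemma sum_n_psum a N : sum_n a N = psum a (S N).
Proof. rewrite sum_n_Reals. induction N as [|N IH]; simpl in *; [lra|]. now rewrite IH. Qed.

Lemma is_series_psum f n : (forall l, (n <= l)%nat -> f l = 0) -> is_series f (psum f n).
Proof.
  intros H. apply is_series_Reals. intros eps Heps. exists n. intros m Hm.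
  rewrite <- sum_n_Reals, sum_n_psum, (psum_stable f n (S m)) by (auto; lia).
  unfold R_dist. rewrite Rminus_diag, Rabs_R0. exact Heps.
Qed.

Lemma Series_psum_stable f n : (forall l, (n <= l)%nat -> f l = 0) -> Series f = psum f n.
Proof. intros H. apply is_series_unique, is_series_psum, H. Qed.

Lemma Series_nonneg a : ex_series a -> (forall n, 0 <= a n) -> 0 <= Series a.
Proof.
  intros He H. replace 0 with (Series (fun _ : nat => 0)) at 1
    by (apply (Series_psum_stable _ 0); reflexivity).
  apply Series_le; [intros; split; [lra|apply H]|exact He].
Qed.

Lemma ex_series_psum (g : nat -> nat -> R) m :
  (forall k, (k < m)%nat -> ex_series (g k)) -> ex_series (fun n => psum (fun k => g k n) m).
Proof.
  induction m as [|m IH]; intros H; simpl.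
  - eexists. apply (is_series_psum _ 0). reflexivity.
  - apply (ex_series_plus (K := R_AbsRing) (V := R_NormedModule)); [apply IH; intros|]; apply H; lia.
Qed.

Lemma Series_psum (g : nat -> nat -> R) m : (forall k, (k < m)%nat -> ex_series (g k)) ->
  Series (fun n => psum (fun k => g k n) m) = psum (fun k => Series (g k)) m.
Proof.
  induction m as [|m IH]; intros H; simpl.
  - apply (Series_psum_stable _ 0). reflexivity.
  - rewrite Series_plus, IH by (try apply ex_series_psum; intros; apply H; lia). reflexivity.
Qed.

Section RowFinite.
Variables (A : nat -> nat -> R) (width : nat -> nat).
Hypothesis A_width : forall k l, (width k <= l)%nat -> A k l = 0.

Lemma Series_row k W : Series (fun l => A k l * W l) = psum (fun l => A k l * W l) (width k).
Proof. apply Series_psum_stable. intros l Hl. rewrite A_width by exact Hl. ring. Qed.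

Lemma ex_series_row k W : ex_series (fun l => A k l * W l).
Proof. eexists. apply (is_series_psum _ (width k)). intros l Hl. rewrite A_width by exact Hl. ring. Qed.

Lemma Series_row_psum k (G : nat -> nat -> R) N :
  psum (fun n => Series (fun l => A k l * G n l)) N
  = Series (fun l => A k l * psum (fun n => G n l) N).
Proof.
  rewrite Series_row, (psum_ext _ (fun n => psum (fun l => A k l * G n l) (width k)))
    by (intros; apply Series_row).
  rewrite psum_swap. apply psum_ext. intros. now rewrite psum_scal.
Qed.

Lemma Series_row_plus k G1 G2 :
  Series (fun l => A k l * G1 l) + Series (fun l => A k l * G2 l)
  = Series (fun l => A k l * (G1 l + G2 l)).
Proof.
  rewrite !Series_row, <- psum_plus. apply psum_ext. intros. ring.
Qed.

Hypothesis A_ge0 : forall k l, 0 <= A k l.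

Lemma Series_row_le k G1 G2 : (forall l, G1 l <= G2 l) ->
  Series (fun l => A k l * G1 l) <= Series (fun l => A k l * G2 l).
Proof.
  intros H. rewrite !Series_row. apply psum_le. intros l _.
  apply Rmult_le_compat_l; [apply A_ge0|apply H].
Qed.

Lemma Series_row_nonneg k G : (forall l, 0 <= G l) -> 0 <= Series (fun l => A k l * G l).
Proof.
  intros H. rewrite !Series_row. apply psum_nonneg. intros l _.
  apply Rmult_le_pos; [apply A_ge0|apply H].
Qed.

Lemma nstep_nonneg n i j : 0 <= nstep A n i j.
Proof.
  revert i j. induction n as [|n IH]; intros i j; simpl.
  - destruct (i =? j)%nat; lra.
  - now apply Series_row_nonneg.
Qed.

Lemma nstep_S_ge n i j k : A i k * nstep A n k j <= nstep A (S n) i j.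
Proof.
  simpl. rewrite Series_row.
  destruct (le_lt_dec (width i) k) as [Hk|Hk].
  - rewrite A_width, Rmult_0_l by exact Hk. apply psum_nonneg. intros.
    apply Rmult_le_pos; [apply A_ge0|apply nstep_nonneg].
  - apply (psum_ge_term (fun l => A i l * nstep A n l j)); [|exact Hk].
    intros. apply Rmult_le_pos; [apply A_ge0|apply nstep_nonneg].
Qed.

End RowFinite.

(** * Recurrence from a Lyapunov function *)

Section LyapunovRecurrence.
Variables (P : nat -> nat -> R) (width : nat -> nat) (j : nat).
Hypothesis P_width : forall k l, (width k <= l)%nat -> P k l = 0.
Hypothesis P_ge0 : forall k l, 0 <= P k l.
Hypothesis P_stoch : forall k, Series (fun l => P k l * 1) = 1.

Definition zero_at (G : nat -> R) l := if (l =? j)%nat then 0 else G l.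

Lemma zero_at_le G1 G2 : (forall l, G1 l <= G2 l) -> forall l, zero_at G1 l <= zero_at G2 l.
Proof. intros H l. unfold zero_at. destruct (l =? j)%nat; [lra|apply H]. Qed.

Lemma psum_zero_at (G : nat -> nat -> R) N l :
  psum (fun n => zero_at (G n) l) N = zero_at (fun l => psum (fun n => G n l) N) l.
Proof.
  unfold zero_at. destruct (l =? j)%nat; [|reflexivity].
  rewrite psum_const. ring.
Qed.

Lemma Series_zero_at k G :
  Series (fun l => if (l =? j)%nat then 0 else P k l * G l) = Series (fun l => P k l * zero_at G l).
Proof. apply Series_ext. intros l. unfold zero_at. destruct (l =? j)%nat; ring. Qed.

Lemma Series_row_split_at k G :
  Series (fun l => P k l * G l) = Series (fun l => P k l * zero_at G l) + P k j * G j.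
Proof.
  rewrite !(Series_row P width P_width).
  rewrite (psum_ext _ (fun l => P k l * zero_at G l + (if (j =? l)%nat then P k l * G l else 0)))
    by (intros l _; unfold zero_at; destruct (Nat.eqb_spec l j), (Nat.eqb_spec j l); lia || ring).
  rewrite psum_plus, psum_delta. destruct (Nat.ltb_spec j (width k)); [reflexivity|].
  rewrite P_width by exact H. ring.
Qed.

(* [avoid n k] is the probability that the chain started at [k] does not visit [j] at
   times [1, ..., n]. *)
Fixpoint avoid (n k : nat) : R :=
  match n with
  | O => 1
  | S n => Series (fun l => if (l =? j)%nat then 0 else P k l * avoid n l)
  end.

Lemma avoid_S n k : avoid (S n) k = Series (fun l => P k l * zero_at (avoid n) l).
Proof. apply Series_zero_at. Qed.

Lemma avoid_nonneg n k : 0 <= avoid n k.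
Proof.
  revert k. induction n as [|n IH]; intros k; [simpl; lra|]. rewrite avoid_S.
  apply (Series_row_nonneg P width); [exact P_width|exact P_ge0|].
  intros l. unfold zero_at. destruct (l =? j)%nat; [lra|apply IH].
Qed.

Lemma avoid_S_le n k : avoid (S n) k <= avoid n k.
Proof.
  revert k. induction n as [|n IH]; intros k; rewrite avoid_S.
  - change (avoid 0 k) with 1. rewrite <- (P_stoch k). apply (Series_row_le P width); [exact P_width|exact P_ge0|].
    intros l. unfold zero_at. destruct (l =? j)%nat; simpl; lra.
  - rewrite avoid_S. apply (Series_row_le P width); [exact P_width|exact P_ge0|].
    apply zero_at_le, IH.
Qed.

Lemma avoid_antitone n m k : (n <= m)%nat -> avoid m k <= avoid n k.
Proof. induction 1; [lra|]. pose proof (avoid_S_le m k). lra. Qed.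

Lemma psum_fpass_add_avoid N k : psum (fun n => fpass P (S n) k j) N + avoid N k = 1.
Proof.
  revert k. induction N as [|N IH]; intros k; [simpl; ring|].
  rewrite psum_shift, avoid_S.
  rewrite (psum_ext _ (fun n => Series (fun l => P k l * zero_at (fun l => fpass P (S n) l j) l)))
    by (intros n _; apply Series_zero_at).
  rewrite (Series_row_psum P width P_width), Rplus_assoc, (Series_row_plus P width P_width).
  rewrite (Series_ext _ (fun l => P k l * zero_at (fun _ => 1) l)).
  - transitivity (Series (fun l => P k l * 1)); [|apply P_stoch].
    rewrite (Series_row_split_at k (fun _ => 1)). simpl fpass. ring.
  - intros l. rewrite psum_zero_at. unfold zero_at. destruct (l =? j)%nat; [ring|]. now rewrite IH.
Qed.

Variable V : nat -> R.
Hypothesis V_ge0 : forall k, 0 <= V k.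
Hypothesis V_lyapunov : forall k, 1 + Series (fun l => P k l * zero_at V l) <= V k.

Lemma psum_avoid_le N k : psum (fun n => avoid n k) N <= V k.
Proof.
  revert k. induction N as [|N IH]; intros k; [apply V_ge0|].
  rewrite psum_shift, (psum_ext _ (fun n => Series (fun l => P k l * zero_at (avoid n) l)))
    by (intros; apply avoid_S).
  rewrite (Series_row_psum P width P_width).
  eapply Rle_trans; [|apply V_lyapunov]. simpl avoid. apply Rplus_le_compat_l.
  apply (Series_row_le P width); [exact P_width|exact P_ge0|].
  intros l. rewrite psum_zero_at. apply zero_at_le. intros. apply IH.
Qed.

Lemma avoid_le_lyapunov N k : INR N * avoid N k <= V k.
Proof.
  eapply Rle_trans; [|apply (psum_avoid_le N k)]. rewrite <- psum_const.
  apply psum_le. intros. apply avoid_antitone. lia.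
Qed.

Lemma recurrent_state_of_lyapunov : recurrent_state P j.
Proof.
  apply is_series_Reals. intros eps Heps.
  destruct (INR_unbounded (V j / eps)) as [N HN]. exists N. intros n Hn.
  rewrite <- sum_n_Reals, sum_n_psum.
  pose proof (psum_fpass_add_avoid (S n) j). pose proof (avoid_nonneg (S n) j).
  pose proof (avoid_le_lyapunov (S n) j).
  assert (INR N <= INR (S n)) by (apply le_INR; lia).
  assert (V j < eps * INR (S n)).
  { apply (Rmult_lt_reg_r (/ eps)); [now apply Rinv_0_lt_compat|].
    replace (eps * INR (S n) * / eps) with (INR (S n)) by (field; lra). unfold Rdiv in HN. lra. }
  assert (avoid (S n) j < eps).
  { apply (Rmult_lt_reg_l (INR (S n))); [apply lt_0_INR; lia|lra]. }
  unfold R_dist. rewrite Rabs_left1 by lra. lra.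
Qed.

End LyapunovRecurrence.

(** * The jump chain *)

Section Queue.
Variables (lam mu : R).
Hypotheses (Hlam : 0 < lam) (Hmu : 0 < mu).
Notation q := (qmat lam mu).
Notation c := (crate lam mu).
Notation P := (jump_matrix (qmat lam mu) (crate lam mu)).

Lemma crate_pos k : 0 < c k.
Proof. unfold crate. pose proof (pos_INR k). nra. Qed.

Lemma qmat_up k : q k (S k) = lam.
Proof. unfold qmat. now rewrite Nat.eqb_refl. Qed.

Lemma qmat_down k l : (l < k)%nat -> q k l = mu.
Proof.
  intros H. unfold qmat.
  destruct (Nat.eqb_spec l (S k)), (Nat.ltb_spec l k); lia || reflexivity.
Qed.

Lemma qmat_diag k : q k k = - c k.
Proof.
  unfold qmat, crate. destruct (Nat.eqb_spec k (S k)), (Nat.ltb_spec k k); try lia.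
  now rewrite Nat.eqb_refl.
Qed.

Lemma qmat_far k l : (S (S k) <= l)%nat -> q k l = 0.
Proof.
  intros H. unfold qmat.
  destruct (Nat.eqb_spec l (S k)), (Nat.ltb_spec l k), (Nat.eqb_spec l k); lia || reflexivity.
Qed.

Lemma jump_up k : P k (S k) = lam / c k.
Proof.
  unfold jump_matrix. destruct (Nat.eqb_spec k (S k)); [lia|]. now rewrite qmat_up.
Qed.

Lemma jump_down k l : (l < k)%nat -> P k l = mu / c k.
Proof.
  intros H. unfold jump_matrix. destruct (Nat.eqb_spec k l); [lia|]. now rewrite qmat_down.
Qed.

Lemma jump_far k l : (S (S k) <= l)%nat -> P k l = 0.
Proof.
  intros H. unfold jump_matrix. destruct (Nat.eqb_spec k l); [lia|].
  rewrite qmat_far by exact H. apply Rdiv_0_l.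
Qed.

Lemma jump_nonneg k l : 0 <= P k l.
Proof.
  pose proof (crate_pos k) as Hc.
  destruct (lt_eq_lt_dec l k) as [[H|<-]|H].
  - rewrite jump_down by exact H. apply Rlt_le, Rdiv_lt_0_compat; lra.
  - unfold jump_matrix. rewrite Nat.eqb_refl. lra.
  - destruct (Nat.eq_dec l (S k)) as [->|Hne].
    + rewrite jump_up. apply Rlt_le, Rdiv_lt_0_compat; lra.
    + rewrite jump_far by lia. lra.
Qed.

Lemma Series_qmat_row x W :
  Series (fun z => q x z * W z) = lam * W (S x) + mu * psum W x - c x * W x.
Proof.
  rewrite (Series_row q (fun k => S (S k)) qmat_far). simpl psum.
  rewrite qmat_up, qmat_diag, (psum_ext _ (fun l => mu * W l))
    by (intros; rewrite qmat_down by lia; reflexivity).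
  rewrite psum_scal. ring.
Qed.

Lemma Series_jump_row k W :
  Series (fun l => P k l * W l) = (mu * psum W k + lam * W (S k)) / c k.
Proof.
  pose proof (crate_pos k).
  rewrite (Series_row P (fun k => S (S k)) jump_far). simpl psum.
  unfold jump_matrix at 2. rewrite Nat.eqb_refl, jump_up.
  rewrite (psum_ext _ (fun l => mu / c k * W l))
    by (intros; rewrite jump_down by lia; reflexivity).
  rewrite psum_scal. field. lra.
Qed.

Lemma jump_stoch k : Series (fun l => P k l * 1) = 1.
Proof.
  pose proof (crate_pos k). rewrite Series_jump_row, psum_const.
  unfold crate in *. field. lra.
Qed.

Lemma nstep_jump_up d i : 0 < nstep P d i (i + d).
Proof.
  revert i. induction d as [|d IH]; intros i.
  - simpl. rewrite Nat.add_0_r, Nat.eqb_refl. lra.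
  - eapply Rlt_le_trans; [|apply (nstep_S_ge P (fun k => S (S k)) jump_far jump_nonneg d i _ (S i))].
    rewrite jump_up, <- plus_n_Sm. apply Rmult_lt_0_compat; [|apply IH].
    apply Rdiv_lt_0_compat; [exact Hlam|apply crate_pos].
Qed.

Theorem jump_irreducible : irreducible P.
Proof.
  intros i j. destruct (le_lt_dec i j) as [H|H].
  - exists (j - i)%nat. replace j with (i + (j - i))%nat at 2 by lia. apply nstep_jump_up.
  - exists 1%nat.
    eapply Rlt_le_trans; [|apply (nstep_S_ge P (fun k => S (S k)) jump_far jump_nonneg 0 i j j)].
    simpl. rewrite Nat.eqb_refl, Rmult_1_r, jump_down by exact H.
    apply Rdiv_lt_0_compat; [exact Hmu|apply crate_pos].
Qed.

Lemma one_plus_div_le a N V : 0 < a -> a + N <= a * V -> 1 + N / a <= V.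
Proof.
  intros Ha H. apply (Rmult_le_reg_l a); [exact Ha|].
  replace (a * (1 + N / a)) with (a + N) by (field; lra). exact H.
Qed.

Section Lyapunov.
Variable j : nat.

Definition lyap_base := 2 * c j / lam.
Definition lyap_level := 3 * lam / mu + lyap_base ^ j.

(* [lyap_base] is chosen so that [lam * (lyap_base - 1) = lam + 2 * j * mu]: below [j]
   the gain of one step up then pays for the downward jumps.  Above [j] a linear profile
   suffices, because [zero_at j] discards the value [lyap_level] at the target of the
   downward jump to [j]. *)
Definition lyap l :=
  if (l <? j)%nat then lyap_base ^ j - lyap_base ^ l
  else if (l =? j)%nat then lyap_level + 2 * INR l + 3
  else lyap_level + 2 * INR l.

Lemma lyap_base_ge2 : 2 <= lyap_base.
Proof.
  unfold lyap_base, crate. pose proof (pos_INR j).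
  apply (Rmult_le_reg_r lam); [exact Hlam|]. field_simplify; nra.
Qed.

Lemma lyap_level_ge : lyap_base ^ j <= lyap_level /\ 3 * lam <= mu * lyap_level.
Proof.
  unfold lyap_level. assert (0 < 3 * lam / mu) by (apply Rdiv_lt_0_compat; lra).
  assert (0 <= lyap_base ^ j) by (apply pow_le; pose proof lyap_base_ge2; lra).
  split; [lra|]. replace (mu * _) with (3 * lam + mu * lyap_base ^ j) by (field; lra). nra.
Qed.

Lemma lyap_nonneg l : 0 <= lyap l.
Proof.
  pose proof lyap_level_ge as [HG _]. pose proof lyap_base_ge2.
  assert (0 <= lyap_base ^ j) by (apply pow_le; lra). pose proof (pos_INR l).
  unfold lyap. destruct (Nat.ltb_spec l j).
  - assert (lyap_base ^ l <= lyap_base ^ j) by (apply Rle_pow; lra || lia). lra.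
  - destruct (l =? j)%nat; lra.
Qed.

Lemma lyap_below_le l : (l < j)%nat -> lyap l <= lyap_base ^ j.
Proof.
  intros H. unfold lyap. destruct (Nat.ltb_spec l j); [|lia].
  assert (0 <= lyap_base ^ l) by (apply pow_le; pose proof lyap_base_ge2; lra). lra.
Qed.

Lemma psum_zero_at_lyap_le k : (k <= j)%nat -> psum (zero_at j lyap) k <= INR k * lyap_base ^ j.
Proof.
  intros Hk. rewrite <- psum_const. apply psum_le. intros l Hl.
  unfold zero_at. destruct (Nat.eqb_spec l j); [lia|]. apply lyap_below_le. lia.
Qed.

Lemma lyap_drift_below k : (k < j)%nat ->
  1 + (mu * psum (zero_at j lyap) k + lam * zero_at j lyap (S k)) / c k <= lyap k.
Proof.
  intros Hk. pose proof lyap_base_ge2 as Hb. pose proof (crate_pos k) as Hc.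
  set (b := lyap_base) in *.
  assert (HS : zero_at j lyap (S k) = b ^ j - b * b ^ k).
  { unfold zero_at, lyap. destruct (Nat.eqb_spec (S k) j) as [<-|Hne]; [simpl; ring|].
    destruct (Nat.ltb_spec (S k) j); [reflexivity|lia]. }
  assert (Hsum := psum_zero_at_lyap_le k (Nat.lt_le_incl _ _ Hk)). fold b in Hsum.
  assert (Hk' : lyap k = b ^ j - b ^ k) by (unfold lyap; destruct (Nat.ltb_spec k j); lia || reflexivity).
  assert (Hbk : 1 <= b ^ k) by (apply pow_R1_Rle; lra).
  assert (Hlb : lam * b = 2 * c j) by (unfold b, lyap_base; field; lra).
  assert (HkR : INR k <= INR j) by (apply le_INR; lia).
  rewrite HS, Hk'. apply one_plus_div_le; [exact Hc|]. unfold crate in *.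
  assert (Hgain : c k + INR k * mu * b ^ k <= (lam * b - lam) * b ^ k).
  { rewrite Hlb. unfold crate in *. pose proof (pos_INR k).
    assert (0 <= (lam + INR k * mu) * (b ^ k - 1)) by (apply Rmult_le_pos; nra).
    assert (0 <= (INR j - INR k) * mu * b ^ k) by (apply Rmult_le_pos; nra). nra. }
  unfold crate in *. nra.
Qed.

Lemma lyap_drift_at :
  1 + (mu * psum (zero_at j lyap) j + lam * zero_at j lyap (S j)) / c j <= lyap j.
Proof.
  pose proof lyap_level_ge as [HG _]. pose proof (crate_pos j) as Hc.
  pose proof (psum_zero_at_lyap_le j (le_n j)) as Hsum. pose proof (pos_INR j).
  set (M := lyap_level + 2 * INR (S j)).
  assert (HS : zero_at j lyap (S j) = M).
  { unfold zero_at, lyap. destruct (Nat.eqb_spec (S j) j), (Nat.ltb_spec (S j) j); lia || reflexivity. }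
  assert (Hj : lyap j = M + 1).
  { unfold lyap, M. rewrite Nat.ltb_irrefl, Nat.eqb_refl, S_INR. ring. }
  assert (HM : lyap_base ^ j <= M) by (unfold M; rewrite S_INR; lra).
  rewrite HS, Hj. apply one_plus_div_le; [exact Hc|].
  assert (INR j * lyap_base ^ j <= INR j * M) by (apply Rmult_le_compat_l; lra).
  unfold crate in *. nra.
Qed.

Lemma lyap_drift_above k : (j < k)%nat ->
  1 + (mu * psum (zero_at j lyap) k + lam * zero_at j lyap (S k)) / c k <= lyap k.
Proof.
  intros Hk. pose proof lyap_level_ge as [HG HA]. pose proof (crate_pos k) as Hc.
  set (L := lyap_level) in *.
  assert (Hsum : psum (zero_at j lyap) k <= INR k * L + INR k * (INR k - 1) - L).
  { assert (Hb : forall l, zero_at j lyap l <= L + 2 * INR l - (if (j =? l)%nat then L else 0)).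
    { intros l. pose proof (pos_INR l). unfold zero_at.
      destruct (Nat.eqb_spec l j) as [->|Hne]; [rewrite Nat.eqb_refl; lra|].
      destruct (Nat.eqb_spec j l); [lia|].
      destruct (Nat.ltb_spec l j); [pose proof (lyap_below_le l ltac:(lia)); lra|].
      unfold lyap. fold L. destruct (Nat.ltb_spec l j), (Nat.eqb_spec l j); lia || lra. }
    eapply Rle_trans; [apply psum_le; intros l _; apply Hb|].
    rewrite psum_minus, psum_plus, psum_const, psum_scal, psum_id, psum_delta.
    destruct (Nat.ltb_spec j k); [|lia]. right. field. }
  assert (HS : zero_at j lyap (S k) = L + 2 * (INR k + 1)).
  { unfold zero_at, lyap. rewrite S_INR.
    destruct (Nat.eqb_spec (S k) j), (Nat.ltb_spec (S k) j); lia || reflexivity. }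
  assert (Hk' : lyap k = L + 2 * INR k).
  { unfold lyap. destruct (Nat.ltb_spec k j), (Nat.eqb_spec k j); lia || reflexivity. }
  rewrite HS, Hk'. apply one_plus_div_le; [exact Hc|].
  assert (mu * psum (zero_at j lyap) k <= mu * (INR k * L + INR k * (INR k - 1) - L))
    by (apply Rmult_le_compat_l; lra).
  pose proof (pos_INR k). unfold crate in *. nra.
Qed.

Lemma lyap_drift k : 1 + Series (fun l => P k l * zero_at j lyap l) <= lyap k.
Proof.
  rewrite Series_jump_row.
  destruct (lt_eq_lt_dec k j) as [[H| -> ]|H].
  - now apply lyap_drift_below.
  - apply lyap_drift_at.
  - now apply lyap_drift_above.
Qed.

End Lyapunov.

Theorem jump_recurrent : recurrent P.
Proof.
  intros j.
  apply (recurrent_state_of_lyapunov P (fun k => S (S k)) j jump_far jump_nonneg jump_stoch (lyap j)).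
  - apply lyap_nonneg.
  - apply lyap_drift.
Qed.

End Queue.

(** * A comparison principle for the truncated backward equations *)

(* Continuity at [t] relative to [[0, +oo)]: backward solutions are only required to be
   right-continuous at [0]. *)
Definition cont_at_nonneg (f : R -> R) (t : R) : Prop :=
  forall eps, 0 < eps -> exists delta, 0 < delta /\
    forall u, 0 <= u -> Rabs (u - t) < delta -> Rabs (f u - f t) < eps.

Lemma is_derive_cont_at_nonneg f t l : is_derive f t l -> cont_at_nonneg f t.
Proof.
  intros H eps Heps. apply is_derive_Reals in H.
  assert (Hc : derivable_pt f t) by (exists l; exact H).
  destruct (derivable_continuous_pt _ _ Hc eps Heps) as [d [Hd Hdd]].
  exists d. split; [exact Hd|]. intros u _ Hu.
  destruct (Req_dec u t) as [->|Hne].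
  - now rewrite Rminus_diag, Rabs_R0.
  - apply (Hdd u). split; [split; [exact I|auto]|exact Hu].
Qed.

Lemma cont_at_nonneg_plus f g t :
  cont_at_nonneg f t -> cont_at_nonneg g t -> cont_at_nonneg (fun s => f s + g s) t.
Proof.
  intros Hf Hg eps Heps.
  destruct (Hf (eps / 2)) as [d1 [Hd1 H1]]; [lra|].
  destruct (Hg (eps / 2)) as [d2 [Hd2 H2]]; [lra|].
  exists (Rmin d1 d2). split; [now apply Rmin_pos|]. intros u Hu Hut.
  specialize (H1 u Hu (Rlt_le_trans _ _ _ Hut (Rmin_l _ _))).
  specialize (H2 u Hu (Rlt_le_trans _ _ _ Hut (Rmin_r _ _))).
  replace (f u + g u - (f t + g t)) with ((f u - f t) + (g u - g t)) by ring.
  eapply Rle_lt_trans; [apply Rabs_triang|]. lra.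
Qed.

Lemma cont_at_nonneg_opp f t : cont_at_nonneg f t -> cont_at_nonneg (fun s => - f s) t.
Proof.
  intros Hf eps Heps. destruct (Hf eps Heps) as [d [Hd H]]. exists d. split; [exact Hd|].
  intros u Hu Hut. rewrite <- Rabs_Ropp. replace (- (- f u - - f t)) with (f u - f t) by ring.
  now apply H.
Qed.

Lemma cont_at_nonneg_psum (f : nat -> R -> R) n t :
  (forall y, (y < n)%nat -> cont_at_nonneg (f y) t) ->
  cont_at_nonneg (fun s => psum (fun y => f y s) n) t.
Proof.
  induction n as [|n IH]; intros H.
  - simpl. apply (is_derive_cont_at_nonneg _ _ _ (is_derive_const (V := R_NormedModule) 0 t)).
  - apply cont_at_nonneg_plus; [apply IH; intros; apply H|apply H]; lia.
Qed.

Lemma is_derive_psum (f df : nat -> R -> R) n t :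
  (forall y, (y < n)%nat -> is_derive (f y) t (df y t)) ->
  is_derive (fun s => psum (fun y => f y s) n) t (psum (fun y => df y t) n).
Proof.
  induction n as [|n IH]; intros H; simpl.
  - apply (is_derive_const (V := R_NormedModule)).
  - apply (is_derive_plus (K := R_AbsRing) (V := R_NormedModule));
      [apply IH; intros; apply H|apply H]; lia.
Qed.

Lemma cont_at_nonneg_pos_near M (v : nat -> R -> R) s :
  (forall x, (x <= M)%nat -> cont_at_nonneg (v x) s) -> (forall x, (x <= M)%nat -> 0 < v x s) ->
  exists d, 0 < d /\ forall x u, (x <= M)%nat -> 0 <= u -> Rabs (u - s) < d -> 0 < v x u.
Proof.
  intros Hc Hp.
  assert (Hone : forall x, (x <= M)%nat -> exists d, 0 < d /\
            forall u, 0 <= u -> Rabs (u - s) < d -> 0 < v x u).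
  { intros x Hx. destruct (Hc x Hx (v x s) (Hp x Hx)) as [d [Hd H]].
    exists d. split; [exact Hd|]. intros u Hu Hus.
    specialize (H u Hu Hus). apply Rabs_def2 in H. lra. }
  clear Hc Hp. induction M as [|M IH].
  - destruct (Hone 0%nat (le_n 0)) as [d [Hd H]]. exists d. split; [exact Hd|].
    intros x u Hx. replace x with 0%nat by lia. apply H.
  - destruct IH as [d1 [Hd1 H1]]; [intros; apply Hone; lia|].
    destruct (Hone (S M) (le_n _)) as [d2 [Hd2 H2]].
    exists (Rmin d1 d2). split; [now apply Rmin_pos|]. intros x u Hx Hu Hus.
    destruct (Nat.eq_dec x (S M)) as [->|Hne].
    + apply H2; [exact Hu|]. eapply Rlt_le_trans; [exact Hus|apply Rmin_r].
    + apply H1; [lia|exact Hu|]. eapply Rlt_le_trans; [exact Hus|apply Rmin_l].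
Qed.

Lemma nonneg_of_pos_before f s :
  0 < s -> cont_at_nonneg f s -> (forall u, 0 <= u < s -> 0 < f u) -> 0 <= f s.
Proof.
  intros Hs Hc Hpos. apply Rnot_lt_le. intros Hlt.
  destruct (Hc (- f s)) as [d [Hd H]]; [lra|].
  set (u := Rmax 0 (s - d / 2)).
  assert (0 <= u) by apply Rmax_l.
  assert (s - d / 2 <= u) by apply Rmax_r.
  assert (u < s) by (apply Rmax_lub_lt; lra).
  specialize (H u ltac:(lra) ltac:(rewrite Rabs_left; lra)).
  specialize (Hpos u ltac:(lra)). apply Rabs_def2 in H. lra.
Qed.

Lemma derive_nonpos_at_first_zero f s l :
  0 < s -> is_derive f s l -> (forall u, 0 <= u < s -> 0 < f u) -> f s = 0 -> l <= 0.
Proof.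
  intros Hs Hd Hpos Hz. apply Rnot_lt_le. intros Hl.
  apply is_derive_Reals in Hd. destruct (Hd (l / 2)) as [dl Hdl]; [lra|].
  pose proof (cond_pos dl). set (h := - Rmin dl s / 2).
  assert (0 < Rmin dl s) by (now apply Rmin_pos).
  assert (Rmin dl s <= dl) by apply Rmin_l. assert (Rmin dl s <= s) by apply Rmin_r.
  specialize (Hdl h ltac:(unfold h; lra) ltac:(unfold h; rewrite Rabs_left; lra)).
  specialize (Hpos (s + h) ltac:(unfold h; lra)).
  rewrite Hz, Rminus_0_r in Hdl. apply Rabs_def2 in Hdl.
  assert (f (s + h) / h < 0).
  { apply Rmult_pos_neg; [exact Hpos|]. apply Rinv_lt_0_compat. unfold h. lra. }
  lra.
Qed.

Section FirstZero.
Variables (M : nat) (T : R) (v : nat -> R -> R).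
Hypothesis T_ge0 : 0 <= T.
Hypothesis v_init : forall x, (x <= M)%nat -> 0 < v x 0.
Hypothesis v_cont : forall x t, (x <= M)%nat -> 0 <= t <= T -> cont_at_nonneg (v x) t.

Definition pos_upto (s : R) : Prop :=
  0 <= s <= T /\ forall u x, 0 <= u <= s -> (x <= M)%nat -> 0 < v x u.

Lemma pos_upto_extend s : 0 <= s <= T ->
  (forall u x, 0 <= u < s -> (x <= M)%nat -> 0 < v x u) ->
  (forall x, (x <= M)%nat -> 0 < v x s) ->
  exists s', pos_upto s' /\ (s < s' \/ s' = T).
Proof.
  intros Hs Hbefore Hall.
  destruct (cont_at_nonneg_pos_near M v s (fun x Hx => v_cont x s Hx Hs) Hall)
    as [d [Hd Hnear]].
  exists (Rmin T (s + d / 2)).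
  assert (Rmin T (s + d / 2) <= T) by apply Rmin_l.
  assert (Rmin T (s + d / 2) <= s + d / 2) by apply Rmin_r.
  split.
  - split; [split; [apply Rmin_glb|]; lra|].
    intros u x Hu Hx. destruct (Rlt_dec u s); [apply Hbefore; [lra|exact Hx]|].
    apply Hnear; [exact Hx|lra|]. rewrite Rabs_right; lra.
  - destruct (Rlt_dec s T); [left; apply Rmin_glb_lt|right; apply Rmin_left]; lra.
Qed.

Lemma pos_or_first_zero :
  (forall x t, (x <= M)%nat -> 0 <= t <= T -> 0 < v x t) \/
  exists s x, 0 < s <= T /\ (x <= M)%nat /\ v x s = 0 /\
    forall u l, 0 <= u < s -> (l <= M)%nat -> 0 < v l u.
Proof.
  destruct (classic (forall x t, (x <= M)%nat -> 0 <= t <= T -> 0 < v x t)) as [|Hneg];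
    [now left|right].
  assert (HE0 : pos_upto 0).
  { split; [lra|]. intros u x Hu Hx. replace u with 0 by lra. now apply v_init. }
  destruct (completeness pos_upto (ex_intro _ T (fun s Hs => proj2 (proj1 Hs)))
              (ex_intro _ 0 HE0)) as [s [Hub Hlub]].
  assert (Hs0 : 0 <= s) by (apply Hub, HE0).
  assert (HsT : s <= T) by (apply Hlub; intros s' Hs'; apply Hs').
  assert (Hbefore : forall u x, 0 <= u < s -> (x <= M)%nat -> 0 < v x u).
  { intros u x Hu Hx. apply NNPP. intros Hn.
    enough (s <= u) by lra. apply Hlub. intros s' [_ Hs'].
    apply Rnot_lt_le. intros Hlt. apply Hn, Hs'; [lra|exact Hx]. }
  destruct (classic (forall x, (x <= M)%nat -> 0 < v x s)) as [Hall|Hnall].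
  - exfalso. destruct (pos_upto_extend s (conj Hs0 HsT) Hbefore Hall) as [s' [HE' [Hlt| -> ]]].
    + pose proof (Hub s' HE'). lra.
    + apply Hneg. intros x t Hx Ht. apply (proj2 HE'); [lra|exact Hx].
  - apply not_all_ex_not in Hnall as [x Hx]. apply imply_to_and in Hx as [Hx Hnpos].
    assert (Hspos : 0 < s).
    { destruct (Req_dec s 0) as [Hz|]; [|lra]. rewrite Hz in Hnpos. now pose proof (v_init x Hx). }
    assert (0 <= v x s).
    { apply nonneg_of_pos_before; [exact Hspos|apply v_cont; [exact Hx|lra]|].
      intros u Hu. now apply Hbefore. }
    exists s, x. repeat split; try lra; exact Hx || exact Hbefore.
Qed.

End FirstZero.

Lemma finite_system_stays_pos M T (v v' : nat -> R -> R) :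
  0 <= T ->
  (forall x, (x <= M)%nat -> 0 < v x 0) ->
  (forall x t, (x <= M)%nat -> 0 <= t <= T -> cont_at_nonneg (v x) t) ->
  (forall x t, (x <= M)%nat -> 0 < t <= T -> is_derive (v x) t (v' x t)) ->
  (forall x t, (x <= M)%nat -> 0 < t <= T ->
     (forall l, (l <= M)%nat -> 0 <= v l t) -> v x t = 0 -> 0 < v' x t) ->
  forall x t, (x <= M)%nat -> 0 <= t <= T -> 0 < v x t.
Proof.
  intros HT Hinit Hc Hd Hpush.
  destruct (pos_or_first_zero M T v HT Hinit Hc) as [Hpos|[s [x [Hs [Hx [Hz Hbefore]]]]]];
    [exact Hpos|exfalso].
  assert (Hnn : forall l, (l <= M)%nat -> 0 <= v l s).
  { intros l Hl. apply nonneg_of_pos_before; [lra|apply Hc; [exact Hl|lra]|].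
    intros u Hu. now apply Hbefore. }
  pose proof (Hpush x s Hx Hs Hnn Hz).
  assert (v' x s <= 0).
  { apply (derive_nonpos_at_first_zero (v x) s); [lra|now apply Hd| |exact Hz].
    intros u Hu. now apply Hbefore. }
  lra.
Qed.

Section Comparison.
Variables (lam mu : R).
Hypotheses (Hlam : 0 < lam) (Hmu : 0 < mu).
Notation q := (qmat lam mu).

Lemma Series_qmat_row_at_min (w : nat -> R) y :
  (forall l, (l <= S y)%nat -> w y <= w l) -> 0 <= Series (fun z => q y z * w z).
Proof.
  intros Hmin. rewrite Series_qmat_row. unfold crate.
  assert (INR y * w y <= psum w y)
    by (rewrite <- psum_const; apply psum_le; intros; apply Hmin; lia).
  assert (w y <= w (S y)) by (apply Hmin; lia).
  assert (mu * (INR y * w y) <= mu * psum w y) by (apply Rmult_le_compat_l; lra).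
  assert (lam * w y <= lam * w (S y)) by (apply Rmult_le_compat_l; lra).
  lra.
Qed.

Lemma Series_qmat_row_affine y (f g : nat -> R) a b :
  Series (fun z => q y z * (f z + (a * g z + b)))
  = Series (fun z => q y z * f z) + a * Series (fun z => q y z * g z).
Proof.
  rewrite !Series_qmat_row, psum_plus, psum_plus, psum_scal, psum_const. unfold crate. ring.
Qed.

Lemma Series_qmat_row_pow2 y : Series (fun z => q y z * 2 ^ z) <= lam * 2 ^ y.
Proof.
  rewrite Series_qmat_row. unfold crate.
  assert (Hgeom : psum (pow 2) y = 2 ^ y - 1).
  { induction y as [|y IH]; simpl psum; [simpl; ring|]. rewrite IH. simpl. ring. }
  assert (Hy : (1 - INR y) * 2 ^ y <= 1).
  { destruct y as [|y]; [simpl; lra|]. rewrite S_INR. pose proof (pos_INR y).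
    assert (0 < 2 ^ S y) by (apply pow_lt; lra). nra. }
  rewrite Hgeom. simpl pow at 1.
  assert (mu * ((1 - INR y) * 2 ^ y) <= mu * 1) by (apply Rmult_le_compat_l; lra).
  lra.
Qed.

Lemma supersolution_nonneg M T (w w' : nat -> R -> R) :
  0 <= T ->
  (forall x, (x <= M)%nat -> 0 <= w x 0) ->
  (forall x t, (x <= M)%nat -> 0 <= t <= T -> cont_at_nonneg (w x) t) ->
  (forall x t, (x <= M)%nat -> 0 < t <= T -> is_derive (w x) t (w' x t)) ->
  (forall x t, (x <= M)%nat -> 0 < t <= T -> Series (fun z => q x z * w z t) <= w' x t) ->
  (forall t, 0 < t <= T -> 0 <= w (S M) t \/ w (S M) t = w M t) ->
  forall x t, (x <= M)%nat -> 0 <= t <= T -> 0 <= w x t.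
Proof.
  intros HT Hinit Hc Hd Hsuper Hbd x t Hx Ht. apply Rnot_lt_le. intros Hlt.
  (* perturb by [eps * exp s] to make the differential inequality strict *)
  set (eps := - w x t / exp t).
  assert (Heps : 0 < eps) by (apply Rdiv_lt_0_compat; [lra|apply exp_pos]).
  assert (Hexp : forall s, is_derive (fun s => eps * exp s) s (eps * exp s))
    by (intros; apply is_derive_scal, is_derive_exp).
  enough (0 < w x t + eps * exp t)
    by (unfold eps in *; pose proof (exp_pos t); field_simplify in H; lra).
  apply (finite_system_stays_pos M T (fun y s => w y s + eps * exp s)
           (fun y s => w' y s + eps * exp s) HT); [| | | |exact Hx|exact Ht].
  - intros y Hy. rewrite exp_0. pose proof (Hinit y Hy). lra.
  - intros y s Hy Hs. apply cont_at_nonneg_plus; [now apply Hc|].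
    eapply is_derive_cont_at_nonneg, Hexp.
  - intros y s Hy Hs. apply (is_derive_plus (K := R_AbsRing) (V := R_NormedModule)); [now apply Hd|apply Hexp].
  - intros y s Hy Hs Hnn Hz. pose proof (exp_pos s).
    assert (HE : 0 < eps * exp s) by nra.
    enough (0 <= Series (fun z => q y z * w z s)) by (pose proof (Hsuper y s Hy Hs); lra).
    apply Series_qmat_row_at_min. intros l Hl.
    destruct (le_lt_dec l M) as [HlM|HlM]; [pose proof (Hnn l HlM); lra|].
    assert (l = S M /\ y = M) as [ -> -> ] by lia.
    destruct (Hbd s Hs) as [Hb| -> ]; lra.
Qed.

Definition rsum (p : R -> nat -> nat -> R) (N : nat) (t : R) (x : nat) : R :=
  psum (fun y => p t x y) (S N).

Section BackwardSolution.
Variable p : R -> nat -> nat -> R.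
Hypothesis p_sol : backward_solution q p.

Lemma rsum_nonneg N t x : 0 <= t -> 0 <= rsum p N t x.
Proof.
  intros Ht. apply psum_nonneg. intros. now apply (proj1 p_sol).
Qed.

Lemma rsum_init N x : (x <= N)%nat -> rsum p N 0 x = 1.
Proof.
  intros Hx. unfold rsum.
  rewrite (psum_ext _ (fun y => if (x =? y)%nat then 1 else 0))
    by (intros; apply (proj1 (proj2 p_sol))).
  rewrite psum_delta. destruct (Nat.ltb_spec x (S N)); [reflexivity|lia].
Qed.

Lemma rsum_derive N x t : 0 < t ->
  is_derive (fun s => rsum p N s x) t (Series (fun z => q x z * rsum p N t z)).
Proof.
  intros Ht. destruct p_sol as (_ & _ & _ & Hd). unfold rsum.
  rewrite <- (Series_row_psum q (fun k => S (S k)) (qmat_far lam mu) x (fun y z => p t z y)).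
  apply (is_derive_psum (fun y s => p s x y) (fun y t => Series (fun z => q x z * p t z y))).
  intros y _. now apply Hd.
Qed.

Lemma rsum_cont N x t : 0 <= t -> cont_at_nonneg (fun s => rsum p N s x) t.
Proof.
  intros Ht. destruct p_sol as (_ & _ & Hc & Hd). apply cont_at_nonneg_psum. intros y _.
  destruct (Req_dec t 0) as [->|Hne].
  - intros eps Heps. destruct (Hc x y eps Heps) as [d [Hd0 Hdd]].
    exists d. split; [exact Hd0|]. intros u Hu Hud.
    rewrite Rminus_0_r in Hud. apply Rabs_def2 in Hud. apply Hdd. lra.
  - eapply is_derive_cont_at_nonneg, (Hd t x y). lra.
Qed.

Lemma rsum_lower_bound N x t : (x <= N)%nat -> 0 <= t ->
  1 - exp (lam * t) / 2 ^ S N * 2 ^ x <= rsum p N t x.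
Proof.
  intros Hx Ht.
  set (d := fun s => exp (lam * s) / 2 ^ S N).
  assert (Hpow : 0 < 2 ^ S N) by (apply pow_lt; lra).
  assert (Hdg : forall y s, is_derive (fun s => d s * 2 ^ y + -1) s (lam * d s * 2 ^ y)).
  { intros y s. unfold d. auto_derive; [exact I|]. simpl pow. field. apply pow_nonzero. lra. }
  enough (Hw : 0 <= rsum p N t x + (d t * 2 ^ x + -1)) by (unfold d in Hw; lra).
  apply (supersolution_nonneg N t (fun y s => rsum p N s y + (d s * 2 ^ y + -1))
           (fun y s => Series (fun z => q y z * rsum p N s z) + lam * d s * 2 ^ y) Ht);
    [| | | | |exact Hx|lra].
  - intros y Hy. rewrite rsum_init by exact Hy. unfold d. rewrite Rmult_0_r, exp_0.
    assert (0 < 1 / 2 ^ S N * 2 ^ y) by (apply Rmult_lt_0_compat; [apply Rdiv_lt_0_compat|apply pow_lt]; lra).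
    lra.
  - intros y s Hy Hs. apply cont_at_nonneg_plus; [apply rsum_cont; lra|].
    eapply is_derive_cont_at_nonneg, Hdg.
  - intros y s Hy Hs.
    apply (is_derive_plus (K := R_AbsRing) (V := R_NormedModule)); [apply rsum_derive; lra|apply Hdg].
  - intros y s Hy Hs. rewrite Series_qmat_row_affine. apply Rplus_le_compat_l.
    pose proof (Series_qmat_row_pow2 y). assert (0 < d s) by (apply Rdiv_lt_0_compat; [apply exp_pos|lra]).
    replace (lam * d s * 2 ^ y) with (d s * (lam * 2 ^ y)) by ring.
    apply Rmult_le_compat_l; lra.
  - intros s Hs. left. pose proof (rsum_nonneg N s (S N) ltac:(lra)).
    assert (1 <= exp (lam * s)) by (pose proof (exp_ineq1_le (lam * s)); nra).
    unfold d. replace (exp (lam * s) / 2 ^ S N * 2 ^ S N) with (exp (lam * s)) by (field; lra).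
    lra.
Qed.

End BackwardSolution.
End Comparison.

(** * An explicit backward solution with substochastic rows *)

Lemma pow_div_fact_le_exp r n : 0 <= r -> r ^ n / INR (fact n) <= exp r.
Proof.
  intros Hr. eapply Rle_trans; [|apply (exp_ge_taylor r n Hr)].
  rewrite <- sum_n_Reals, sum_n_psum.
  apply (psum_ge_term (fun k => r ^ k / INR (fact k))); [|lia].
  intros. apply Rdiv_le_0_compat; [now apply pow_le|apply INR_fact_lt_0].
Qed.

Lemma CV_radius_exp_bounded (a : nat -> R) r0 : 0 <= r0 ->
  (forall n, Rabs (a n) <= r0 ^ n / INR (fact n)) -> forall t, Rbar_lt (Rabs t) (CV_radius a).
Proof.
  intros Hr0 Ha t. set (r := Rabs t + 1).
  assert (Hr : 0 <= r) by (unfold r; pose proof (Rabs_pos t); lra).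
  assert (Hle : Rbar_le r (CV_radius a)).
  { apply (proj1 (CV_radius_bounded a)). exists (exp (r0 * r)). intros n.
    rewrite Rabs_mult, (Rabs_right (r ^ n)) by (apply Rle_ge, pow_le, Hr).
    eapply Rle_trans; [apply Rmult_le_compat_r; [apply pow_le, Hr|apply Ha]|].
    rewrite <- (pow_div_fact_le_exp (r0 * r) n) by nra.
    rewrite Rpow_mult_distr. right. unfold Rdiv. ring. }
  eapply Rbar_lt_le_trans; [|exact Hle]. simpl. unfold r. lra.
Qed.

Section Lumped.
Variables (lam mu : R).
Hypotheses (Hlam : 0 < lam) (Hmu : 0 < mu).
Notation q := (qmat lam mu).
Variable y : nat.

(* Generator of the chain on [{0, ..., y+1}] obtained by merging all states [>= y+1]:
   from a merged state every state [l <= y] is still reached at rate [mu]. *)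
Definition lumped_gen (i k : nat) : R :=
  if (i <=? y)%nat then q i k else if (k <=? y)%nat then mu else - (INR (S y) * mu).

Definition lumped_rate := lam + INR (S y) * mu.

Definition lumped_shift (i k : nat) : R :=
  lumped_gen i k + if (i =? k)%nat then lumped_rate else 0.

Lemma lumped_rate_pos : 0 < lumped_rate.
Proof. unfold lumped_rate. pose proof (pos_INR (S y)). nra. Qed.

Lemma lumped_shift_bounds i k : (i <= S y)%nat -> (k <= S y)%nat ->
  0 <= lumped_shift i k <= lumped_rate.
Proof.
  intros Hi Hk. unfold lumped_shift, lumped_gen, lumped_rate.
  pose proof (pos_INR y). rewrite S_INR.
  destruct (Nat.leb_spec i y) as [Hiy|Hiy].
  - assert (INR i <= INR y) by (apply le_INR, Hiy).
    assert (0 <= (INR y - INR i) * mu) by (apply Rmult_le_pos; lra).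
    assert (0 <= INR i * mu) by (apply Rmult_le_pos; [apply pos_INR|lra]).
    destruct (lt_eq_lt_dec k i) as [[Hki| <- ]|Hki].
    + rewrite qmat_down by exact Hki. destruct (Nat.eqb_spec i k); [lia|]. split; nra.
    + rewrite qmat_diag, Nat.eqb_refl. unfold crate. split; nra.
    + destruct (Nat.eqb_spec i k); [lia|]. destruct (Nat.eq_dec k (S i)) as [->|Hne].
      * rewrite qmat_up. split; nra.
      * rewrite qmat_far by lia. split; nra.
  - replace i with (S y) by lia. destruct (Nat.leb_spec k y).
    + destruct (Nat.eqb_spec (S y) k); [lia|]. split; nra.
    + replace k with (S y) by lia. rewrite Nat.eqb_refl. split; nra.
Qed.

(* [lumped_pow n] is the [y]-th column of the [n]-th power of [lumped_shift]. *)
Fixpoint lumped_pow (n i : nat) : R :=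
  match n with
  | O => if (i =? y)%nat then 1 else 0
  | S n => psum (fun k => lumped_shift i k * lumped_pow n k) (S (S y))
  end.

Lemma lumped_pow_bounds n i : (i <= S y)%nat ->
  0 <= lumped_pow n i <= (INR (S (S y)) * lumped_rate) ^ n.
Proof.
  revert i. induction n as [|n IH]; intros i Hi; cbn [lumped_pow].
  - destruct (i =? y)%nat; simpl; lra.
  - split.
    + apply psum_nonneg. intros k Hk.
      apply Rmult_le_pos; [apply lumped_shift_bounds|apply IH]; lia.
    + eapply Rle_trans; [apply (psum_le _ (fun _ => lumped_rate * (INR (S (S y)) * lumped_rate) ^ n))|].
      * intros k Hk. pose proof (lumped_shift_bounds i k Hi ltac:(lia)).
        pose proof (IH k ltac:(lia)). apply Rmult_le_compat; lra.
      * rewrite psum_const, <- tech_pow_Rmult. right. ring.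
Qed.

Definition lumped_coef (i n : nat) : R := lumped_pow n i / INR (fact n).

Lemma lumped_coef_radius i t : (i <= S y)%nat -> Rbar_lt (Rabs t) (CV_radius (lumped_coef i)).
Proof.
  intros Hi. apply (CV_radius_exp_bounded _ (INR (S (S y)) * lumped_rate)).
  - pose proof lumped_rate_pos. pose proof (pos_INR (S (S y))). nra.
  - intros n. pose proof (lumped_pow_bounds n i Hi). pose proof (INR_fact_lt_0 n).
    unfold lumped_coef. rewrite Rabs_right by (apply Rle_ge, Rdiv_le_0_compat; lra).
    apply Rmult_le_compat_r; [apply Rlt_le, Rinv_0_lt_compat|]; lra.
Qed.

Lemma ex_series_lumped_coef i t : (i <= S y)%nat -> ex_series (fun n => lumped_coef i n * t ^ n).
Proof. intros Hi. apply ex_pseries_R, CV_radius_inside, lumped_coef_radius, Hi. Qed.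

Definition lumped_exp (i : nat) (t : R) : R := PSeries (lumped_coef i) t.

Lemma lumped_exp_nonneg i t : (i <= S y)%nat -> 0 <= t -> 0 <= lumped_exp i t.
Proof.
  intros Hi Ht. apply Series_nonneg; [now apply ex_series_lumped_coef|].
  intros n. apply Rmult_le_pos; [|now apply pow_le].
  apply Rdiv_le_0_compat; [now apply lumped_pow_bounds|apply INR_fact_lt_0].
Qed.

Lemma lumped_exp_derive i t : (i <= S y)%nat ->
  is_derive (lumped_exp i) t (psum (fun k => lumped_shift i k * lumped_exp k t) (S (S y))).
Proof.
  intros Hi. unfold lumped_exp.
  replace (psum _ _) with (PSeries (PS_derive (lumped_coef i)) t);
    [now apply is_derive_PSeries, lumped_coef_radius|].
  rewrite (psum_ext _ (fun k => Series (fun n => lumped_shift i k * (lumped_coef k n * t ^ n))))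
    by (intros; unfold PSeries; now rewrite Series_scal_l).
  unfold PSeries. rewrite <- Series_psum.
  2:{ intros k Hk. apply (ex_series_scal_l (K := R_AbsRing) (V := R_NormedModule)).
      apply ex_series_lumped_coef. lia. }
  apply Series_ext. intros n. unfold PS_derive, lumped_coef. cbn [lumped_pow].
  rewrite fact_simpl, mult_INR, S_INR.
  rewrite (psum_ext (fun k => lumped_shift i k * (lumped_pow n k / INR (fact n) * t ^ n))
             (fun k => / INR (fact n) * t ^ n * (lumped_shift i k * lumped_pow n k)))
    by (intros; unfold Rdiv; ring).
  rewrite psum_scal. pose proof (INR_fact_lt_0 n). pose proof (pos_INR n). field. lra.
Qed.

(* [exp (- rate t) * exp (t (A + rate I)) = exp (t A)]; the shift by [rate] makes all
   terms of the power series nonnegative. *)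
Definition lumped_col (k : nat) (t : R) : R := exp (- lumped_rate * t) * lumped_exp k t.

Lemma lumped_col_derive k t : (k <= S y)%nat ->
  is_derive (lumped_col k) t (psum (fun i => lumped_gen k i * lumped_col i t) (S (S y))).
Proof.
  intros Hk. unfold lumped_col.
  assert (He : is_derive (fun t => exp (- lumped_rate * t)) t (- lumped_rate * exp (- lumped_rate * t)))
    by (auto_derive; [exact I|ring]).
  replace (psum _ _) with
    (plus (mult (- lumped_rate * exp (- lumped_rate * t)) (lumped_exp k t))
          (mult (exp (- lumped_rate * t)) (psum (fun i => lumped_shift k i * lumped_exp i t) (S (S y))))).
  - apply (is_derive_mult (K := R_AbsRing) (fun t => exp (- lumped_rate * t)) (lumped_exp k));
      [exact He|now apply lumped_exp_derive|].
    intros. apply Rmult_comm.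
  - unfold lumped_shift. rewrite (psum_ext _ (fun i => lumped_gen k i * lumped_exp i t
        + (if (k =? i)%nat then lumped_rate * lumped_exp i t else 0)))
      by (intros; destruct (k =? _)%nat; ring).
    rewrite psum_plus, psum_delta. destruct (Nat.ltb_spec k (S (S y))); [|lia].
    rewrite (psum_ext (fun i => lumped_gen k i * (exp (- lumped_rate * t) * lumped_exp i t))
               (fun i => exp (- lumped_rate * t) * (lumped_gen k i * lumped_exp i t))) by (intros; ring).
    rewrite psum_scal. unfold plus, mult. simpl. ring.
Qed.

Lemma psum_lumped_gen_top (v : nat -> R) :
  psum (fun k => lumped_gen (S y) k * v k) (S (S y)) = mu * psum v (S y) - INR (S y) * mu * v (S y).
Proof.
  change (psum ?f (S (S y))) with (psum f (S y) + f (S y)).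
  rewrite (psum_ext _ (fun k => mu * v k)), psum_scal.
  - unfold lumped_gen. destruct (Nat.leb_spec (S y) y); [lia|].
    destruct (Nat.leb_spec (S y) y); [lia|]. ring.
  - intros l Hl. unfold lumped_gen.
    destruct (Nat.leb_spec (S y) y), (Nat.leb_spec l y); lia || reflexivity.
Qed.

Lemma psum_min_top (v : nat -> R) x : (S y <= x)%nat ->
  psum (fun l => v (Nat.min l (S y))) x = psum v (S y) + INR (x - S y) * v (S y).
Proof.
  induction 1 as [|x Hx IH].
  - rewrite Nat.sub_diag, Rmult_0_l, Rplus_0_r. apply psum_ext. intros. now rewrite Nat.min_l by lia.
  - simpl psum at 1. rewrite IH, Nat.min_r, Nat.sub_succ_l, S_INR by lia. ring.
Qed.

(* The generator sees the states [>= y+1] only through [v (y+1)], so it acts on the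
   merged chain. *)
Lemma Series_qmat_row_lumped x (v : nat -> R) :
  Series (fun z => q x z * v (Nat.min z (S y)))
  = psum (fun k => lumped_gen (Nat.min x (S y)) k * v k) (S (S y)).
Proof.
  destruct (le_lt_dec x y) as [Hx|Hx].
  - rewrite Nat.min_l by lia. rewrite (Series_row q (fun k => S (S k)) (qmat_far lam mu)).
    rewrite (psum_stable (fun k => lumped_gen x k * v k) (S (S x))); [|intros l Hl|lia].
    + apply psum_ext. intros l Hl. unfold lumped_gen. destruct (Nat.leb_spec x y); [|lia].
      now rewrite Nat.min_l by lia.
    + unfold lumped_gen. destruct (Nat.leb_spec x y); [|lia]. rewrite qmat_far by lia. ring.
  - rewrite Nat.min_r, psum_lumped_gen_top, Series_qmat_row, psum_min_top by lia.
    rewrite !Nat.min_r by lia. unfold crate. rewrite minus_INR by lia. ring.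
Qed.

Definition lumped_sol (x : nat) (t : R) : R := lumped_col (Nat.min x (S y)) t.

Lemma lumped_sol_derive x t :
  is_derive (lumped_sol x) t (Series (fun z => q x z * lumped_sol z t)).
Proof.
  unfold lumped_sol. rewrite (Series_qmat_row_lumped x (fun k => lumped_col k t)).
  apply lumped_col_derive. lia.
Qed.

Lemma lumped_sol_nonneg x t : 0 <= t -> 0 <= lumped_sol x t.
Proof.
  intros Ht. apply Rmult_le_pos; [apply Rlt_le, exp_pos|apply lumped_exp_nonneg; [lia|exact Ht]].
Qed.

Lemma lumped_sol_init x : lumped_sol x 0 = if (x =? y)%nat then 1 else 0.
Proof.
  unfold lumped_sol, lumped_col, lumped_exp.
  rewrite Rmult_0_r, exp_0, Rmult_1_l, PSeries_0. unfold lumped_coef. simpl. rewrite Rdiv_1_r.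
  destruct (Nat.eqb_spec x y) as [->|Hne].
  - now rewrite Nat.min_l, Nat.eqb_refl by lia.
  - destruct (Nat.eqb_spec (Nat.min x (S y)) y); [lia|reflexivity].
Qed.

End Lumped.

(** * Stochasticity of the minimal solution *)

Definition lumped_solution (lam mu : R) (t : R) (x y : nat) : R := lumped_sol lam mu y x t.

Section Stochastic.
Variables (lam mu : R).
Hypotheses (Hlam : 0 < lam) (Hmu : 0 < mu).
Notation q := (qmat lam mu).
Notation p_lumped := (lumped_solution lam mu).

Lemma lumped_solution_backward : backward_solution q p_lumped.
Proof.
  unfold lumped_solution. split; [|split; [|split]].
  - intros t x y Ht. now apply lumped_sol_nonneg.
  - intros x y. now apply lumped_sol_init.
  - intros x y eps Heps.
    destruct (is_derive_cont_at_nonneg _ _ _ (lumped_sol_derive lam mu Hlam Hmu y x 0) eps Heps)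
      as [d [Hd H]].
    exists d. split; [exact Hd|]. intros s Hs. apply H; [lra|]. rewrite Rminus_0_r, Rabs_right; lra.
  - intros t x y _. split; [apply (ex_series_row q (fun k => S (S k)) (qmat_far lam mu))|].
    now apply lumped_sol_derive.
Qed.

Lemma rsum_lumped_solution_far N t x : (S N <= x)%nat -> rsum p_lumped N t x = rsum p_lumped N t (S N).
Proof.
  intros Hx. unfold rsum, lumped_solution, lumped_sol. apply psum_ext. intros y Hy.
  now rewrite !Nat.min_r by lia.
Qed.

Lemma rsum_lumped_solution_le1 N t x : 0 <= t -> rsum p_lumped N t x <= 1.
Proof.
  intros Ht.
  (* [1 - rsum] solves the same backward equation since [q] annihilates constants *)
  assert (Hw : forall x, (x <= S N)%nat -> 0 <= 1 - rsum p_lumped N t x).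
  { intros x0 Hx0.
    apply (supersolution_nonneg lam mu Hlam Hmu (S N) t (fun y s => 1 - rsum p_lumped N s y)
             (fun y s => 0 - Series (fun z => q y z * rsum p_lumped N s z)) Ht); [| | | | |exact Hx0|lra].
    - intros y _. unfold rsum. rewrite (psum_ext _ (fun z => if (y =? z)%nat then 1 else 0))
        by (intros; apply (proj1 (proj2 lumped_solution_backward))).
      rewrite psum_delta. destruct (y <? S N)%nat; lra.
    - intros y s _ Hs. apply cont_at_nonneg_plus.
      + eapply is_derive_cont_at_nonneg, is_derive_const.
      + apply cont_at_nonneg_opp, (rsum_cont lam mu); [exact lumped_solution_backward|lra].
    - intros y s _ Hs.
      exact (is_derive_minus (K := R_AbsRing) (V := R_NormedModule) (fun _ => 1) _ _ _ _
               (is_derive_const 1 s)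
               (rsum_derive lam mu _ lumped_solution_backward N y s ltac:(lra))).
    - intros y s _ _. rewrite !Series_qmat_row, psum_minus, psum_const. right.
      unfold crate, minus, zero. simpl. ring.
    - intros s _. right. now rewrite (rsum_lumped_solution_far N s (S (S N))) by lia. }
  destruct (le_lt_dec x (S N)) as [Hx|Hx].
  - pose proof (Hw x Hx). lra.
  - rewrite rsum_lumped_solution_far by lia. pose proof (Hw (S N) (le_n _)). lra.
Qed.

Lemma minimal_backward_solution_stochastic p : minimal_backward_solution q p ->
  forall t x, 0 <= t -> is_series (fun y => p t x y) 1.
Proof.
  intros [Hsol Hmin] t x Ht.
  set (C := exp (lam * t) * 2 ^ x / 2).
  change (is_lim_seq (sum_n (fun y => p t x y)) 1).
  apply (is_lim_seq_le_le_loc (fun n => 1 - C * (/ 2) ^ n) _ (fun _ => 1)).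
  - exists x. intros n Hn. rewrite sum_n_psum. fold (rsum p n t x). split.
    + eapply Rle_trans; [|apply (rsum_lower_bound lam mu Hlam Hmu p Hsol n x t Hn Ht)].
      right. unfold C. rewrite pow_inv. simpl pow. field. apply pow_nonzero. lra.
    + eapply Rle_trans; [|apply (rsum_lumped_solution_le1 n t x Ht)].
      apply psum_le. intros. apply Hmin; [exact lumped_solution_backward|exact Ht].
  - replace (Finite 1) with (Rbar_minus 1 (Rbar_mult C 0)) by (simpl; f_equal; ring).
    apply (is_lim_seq_minus _ _ 1 (Rbar_mult C 0)); [apply is_lim_seq_const| |simpl; easy].
    apply is_lim_seq_scal_l, is_lim_seq_geom. rewrite Rabs_right; lra.
  - apply is_lim_seq_const.
Qed.

End Stochastic.

Theorem mainTheorem1 (lam mu : R) (Hlam : 0 < lam) (Hmu : 0 < mu) :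
  irreducible (jump_matrix (qmat lam mu) (crate lam mu)) /\
  recurrent (jump_matrix (qmat lam mu) (crate lam mu)) /\
  (forall p : R -> nat -> nat -> R,
     minimal_backward_solution (qmat lam mu) p ->
     forall (t : R) (x : nat), 0 <= t -> is_series (fun y => p t x y) 1).
Proof.
  split; [exact (jump_irreducible lam mu Hlam Hmu)|].
  split; [exact (jump_recurrent lam mu Hlam Hmu)|].
  exact (minimal_backward_solution_stochastic lam mu Hlam Hmu).
Qed.
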